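(* Let $F$ be a finite group and let $N$ be a closed, normal, $\sigma$-stable subgroup of $F^{\mathbb{Z}}$ such that $N\cap F^{[\mathbb{Z}]}=\{1\}$. Then $N$ is finite and contained in the centre of $F^{\mathbb{Z}}$.
   Context: $F^{\mathbb{Z}}$ is the group of all functions $\mathbb{Z}\to F$ with pointwise multiplication and the product topology (with $F$ discrete); $F^{[\mathbb{Z}]}$ is its subgroup of finitely supported functions; $\sigma$ is the shift automorphism $\sigma(f)(n)=f(n+1)$; $N$ is $\sigma$-stable if $\sigma(N)=N$. *)

From mathcomp Require Import all_boot all_order all_algebra all_fingroup.
Set Implicit Arguments. Unset Strict Implicit. Unset Printing Implicit Defensive.

Local Open Scope group_scope.

Definition seqZ (gT : finGroupType) := int -> gT.

Definition pmul (gT : finGroupType) (f g : seqZ gT) : seqZ gT := fun n => f n * g n.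
Definition pinv (gT : finGroupType) (f : seqZ gT) : seqZ gT := fun n => (f n)^-1.
Definition pone (gT : finGroupType) : seqZ gT := fun _ => 1.

Definition shift (gT : finGroupType) (f : seqZ gT) : seqZ gT := fun n => f (n + 1)%R.

Definition is_subgroupZ (gT : finGroupType) (N : seqZ gT -> Prop) : Prop :=
  N (@pone gT) /\ (forall f g, N f -> N g -> N (pmul f g)) /\
  (forall f, N f -> N (pinv f)).

Definition is_normalZ (gT : finGroupType) (N : seqZ gT -> Prop) : Prop :=
  forall f g, N f -> N (pmul (pinv g) (pmul f g)).

(* sigma(N) = N *)
Definition sigma_stable (gT : finGroupType) (N : seqZ gT -> Prop) : Prop :=
  forall h, N h <-> exists f, N f /\ shift f = h.

(* closed in the product topology (F discrete): the complement is open, i.e.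
   every point outside N has a basic cylinder neighbourhood (determined by
   finitely many coordinates) disjoint from N. *)
Definition closedZ (gT : finGroupType) (N : seqZ gT -> Prop) : Prop :=
  forall f, ~ N f -> exists S : seq int,
      forall g, (forall n, n \in S -> g n = f n) -> ~ N g.

Definition fin_supp (gT : finGroupType) (f : seqZ gT) : Prop :=
  exists S : seq int, forall n, n \notin S -> f n = 1.

Definition finite_setZ (gT : finGroupType) (N : seqZ gT -> Prop) : Prop :=
  exists s : seq (seqZ gT), forall f, N f -> exists2 i, (i < size s)%N & f = nth (@pone gT) s i.

Definition in_centreZ (gT : finGroupType) (f : seqZ gT) : Prop :=
  forall g : seqZ gT, pmul f g = pmul g f.

From mathcomp Require Import all_boot all_order all_algebra all_fingroup.
From mathcomp Require Import zify boolp.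
From Stdlib Require Import ClassicalEpsilon.
Set Implicit Arguments. Unset Strict Implicit. Unset Printing Implicit Defensive.

(* Centrality: for f in N and a one-point-supported d, normality puts the
   commutator [f, d] in N; it is finitely supported, hence trivial.
   Finiteness: the values at k of the elements of N that are trivial on [0, k)
   form a decreasing chain of subsets of F, stable from some K on.  Together
   with closedness this lets one cut an element of N that is trivial on
   K-windows at both ends of an interval down to a finitely supported element
   of N, which must be trivial.  If g in N is trivial on [0, L) with
   L = |F|^K + K, two K-windows of g beyond L coincide by pigeonhole; cutting
   g times a translate of g^-1 forces g L = 1.  So g vanishes to the right,
   and by the mirror argument to the left: elements of N are determined by
   their values on [0, L), and N is finite. *)

Import GRing.Theory Num.Theory.
Local Open Scope ring_scope.

Lemma decreasing_sets_stabilize (T : finType) (A : nat -> {set T}) :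
  (forall k, A k.+1 \subset A k) -> exists K, forall k, (K <= k)%N -> A k = A K.
Proof.
move=> decrA.
have subA : {homo A : i j / (i <= j)%N >-> j \subset i}.
  by apply: homo_leq => // j i k ij jk; apply: subset_trans jk ij.
have ex_card : exists n, `[< exists K, #|A K| = n >] by exists #|A 0%N|; apply/asboolP; exists 0%N.
case: (ex_minnP ex_card) => _ /asboolP[K <-] minK.
exists K => k leKk; apply/eqP; rewrite eqEcard subA //=.
by apply: minK; apply/asboolP; exists k.
Qed.

Lemma pigeonhole_nat (T : finType) (W : nat -> T) :
  exists i j, (i < j <= #|T|)%N /\ W i = W j.
Proof.
pose f (i : 'I_#|T|.+1) := W i.
have /injectivePn[x [y neq_xy eq_fxy]] : ~~ injectiveb f.
  by apply/negP => /injectiveP/leq_card; rewrite card_ord ltnn.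
have le_ord (z : 'I_#|T|.+1) : (z <= #|T|)%N by rewrite -ltnS.
case: (ltngtP x y) => [xy|yx|/val_inj xy]; last by rewrite xy eqxx in neq_xy.
- by exists x, y; rewrite xy le_ord.
- by exists y, x; rewrite yx le_ord.
Qed.

Section Sequences.
Variable gT : finGroupType.
Implicit Types (f g : seqZ gT) (N : seqZ gT -> Prop).

Definition tr (t : int) f : seqZ gT := fun n => f (n + t).

Lemma tr0 f : tr 0 f = f.
Proof. by apply: funext => n; rewrite /tr addr0. Qed.

Lemma trD s t f : tr s (tr t f) = tr (s + t) f.
Proof. by apply: funext => n; rewrite /tr addrA. Qed.

Definition tr_stable N := forall t f, N f -> N (tr t f).

Lemma sigma_stable_tr_stable N : sigma_stable N -> tr_stable N.
Proof.
move=> stN.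
have tr1 f : N f -> N (tr 1 f) by move=> Nf; apply/stN; exists f.
have trN1 f : N f -> N (tr (-1) f).
  by case/stN=> g [Ng <-]; rewrite -[shift g]/(tr 1 g) trD addNr tr0.
have trn (k : nat) f : N f -> N (tr k%:Z f) /\ N (tr (- k%:Z) f).
  elim: k f => [|k IHk] f Nf; first by rewrite oppr0 tr0.
  have [Nk Nmk] := IHk f Nf.
  rewrite -addn1 PoszD opprD addrC [- _ + _]addrC -!trD.
  by split; [apply: tr1 | apply: trN1].
by case=> k f Nf; [case: (trn k f Nf) | rewrite NegzE; case: (trn k.+1 f Nf)].
Qed.

Definition agree_on f g (a b : int) : Prop := forall n, a <= n < b -> f n = g n.

Definition trivial_on f (a b : int) : Prop := forall n, a <= n < b -> f n = 1%g.

Definition trunc (a b : int) f : seqZ gT := fun n => if a <= n < b then f n else 1%g.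

Lemma fin_supp_trunc a b f : fin_supp (trunc a b f).
Proof.
exists [seq a + k%:Z | k <- iota 0 `|b - a|] => n.
rewrite /trunc; case: ifP => // /andP[an nb] /mapP[]; exists `|n - a|%N.
  by rewrite mem_iota; lia.
lia.
Qed.

Definition fin_supp_trivial N := forall f, N f -> fin_supp f -> f = @pone gT.

End Sequences.

Section VanishingPropagates.
Variables (gT : finGroupType) (N : seqZ gT -> Prop).
Hypotheses (N1 : N (@pone gT)) (NM : forall f g, N f -> N g -> N (pmul f g))
  (NV : forall f, N f -> N (pinv f)) (NT : tr_stable N) (NC : closedZ N)
  (NF : fin_supp_trivial N).

Definition leading_value (k : nat) (x : gT) : Prop :=
  exists2 g, N g & trivial_on g 0 k%:Z /\ g k%:Z = x.

Lemma leading_value_pred k x : leading_value k.+1 x -> leading_value k x.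
Proof.
case=> g Ng [g0 gk]; exists (tr 1 g); first exact: NT.
split=> [n n0k|]; first by apply: g0; lia.
by rewrite -gk /tr -PoszD addn1.
Qed.

Lemma leading_values_stabilize :
  exists K, forall k x, (K <= k)%N -> leading_value K x -> leading_value k x.
Proof.
pose A k := [set x | `[< leading_value k x >]].
have decrA k : A k.+1 \subset A k.
  by apply/subsetP => x; rewrite !inE => /asboolP/leading_value_pred/asboolP.
have [K stK] := decreasing_sets_stabilize decrA.
exists K => k x leKk lvK.
have : x \in A K by rewrite inE; apply/asboolP.
by rewrite -(stK k leKk) inE => /asboolP.
Qed.

Section StableLeadingValues.
Variable K : nat.
Hypothesis stK : forall k x, (K <= k)%N -> leading_value K x -> leading_value k x.

Lemma agree_on_extend f a (m : nat) :
  (forall t, exists2 h, N h & agree_on h f t (t + K.+1%:Z)) ->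
  exists2 g, N g & agree_on g f a (a + (K + m).+1%:Z).
Proof.
move=> locf; elim: m => [|m [g Ng gf]]; first by rewrite addn0; apply: locf.
set j := a + (K + m).+1%:Z.
have [h Nh hf] := locf (j - K%:Z).
pose u := pmul h (pinv g).
have Nu : N u by apply: NM => //; apply: NV.
(* [u] is trivial on the K-window before [j], so [u j] is a leading value at
   level K, hence also at level K + m + 1. *)
have lvu : leading_value K (u j).
  exists (tr (j - K%:Z) u); first exact: NT.
  split=> [n n0K|]; last by rewrite /tr addrC subrK.
  by rewrite /tr /u /pmul /pinv hf ?gf ?mulgV //; lia.
have [v Nv [v0 vj]] := stK (leq_addr m.+1 K) lvu.
exists (pmul (tr (- a) v) g); first by apply: NM => //; apply: NT.
move=> n an; rewrite /pmul /tr.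
have [nj|jn] := ltrP n j; first by rewrite v0 ?mul1g ?gf //; lia.
have -> : n = j by lia.
have -> : j - a = (K + m.+1)%N%:Z by lia.
by rewrite vj /u /pmul /pinv mulgKV hf //; lia.
Qed.

Lemma mem_of_local_agreement f :
  (forall t, exists2 h, N h & agree_on h f t (t + K.+1%:Z)) -> N f.
Proof.
move=> locf; apply: contrapT => Nf.
have [S SNf] := NC Nf; pose B := (\max_(s <- S) `|s|)%N.
have [g Ng gf] := agree_on_extend (- B%:Z) (B + B)%N locf.
apply: (SNf g) => // n nS; apply: gf.
have : (`|n| <= B)%N by exact: leq_bigmax_seq nS _.
lia.
Qed.

Lemma mem_trunc u (a b : int) : N u ->
  trivial_on u a (a + K%:Z) -> trivial_on u (b - K%:Z) b -> N (trunc a b u).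
Proof.
move=> Nu ua ub; apply: mem_of_local_agreement => t.
have [lt_ta|le_at] := ltrP t a.
  exists (@pone gT) => // n tn; rewrite /trunc /pone.
  by case: ifP => // /andP[an nb]; rewrite ua //; lia.
have [lt_tb|le_bt] := ltrP (t + K%:Z) b.
  by exists u => // n tn; rewrite /trunc; case: ifP => //; lia.
exists (@pone gT) => // n tn; rewrite /trunc /pone.
by case: ifP => // /andP[an nb]; rewrite ub //; lia.
Qed.

End StableLeadingValues.

Lemma trivial_prefix_next : exists L : nat,
  forall g, N g -> trivial_on g 0 L%:Z -> g L%:Z = 1%g.
Proof.
have [K stK] := leading_values_stabilize.
pose M := #|{ffun 'I_K -> gT}|.
exists (M + K)%N => g Ng g0; set L := (M + K)%N in g0 *.
pose W i := [ffun t : 'I_K => g (L + i + t)%N%:Z].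
have [i [j [/andP[lt_ij le_jM] eqW]]] := pigeonhole_nat W; rewrite -/M in le_jM.
pose p := (j - i)%N.
pose u := pmul g (pinv (tr p%:Z g)).
have Nu : N u by apply: NM => //; apply/NV/NT.
have u0 : trivial_on u 0 K%:Z.
  by move=> n nK; rewrite /u /pmul /pinv /tr !g0 ?invg1 ?mulg1 //; lia.
pose R := (L + i + K)%N%:Z.
have uR : trivial_on u (R - K%:Z) R.
  case=> [t|t] tR; last by lia.
  have tK : (t - (L + i) < K)%N by lia.
  have := congr1 (fun w : {ffun 'I_K -> gT} => w (Ordinal tK)) eqW; rewrite !ffunE /= /u /pmul /pinv /tr.
  have -> : t%:Z = (L + i + (t - (L + i)))%N%:Z by lia.
  have -> : (L + i + (t - (L + i)))%N%:Z + p%:Z = (L + j + (t - (L + i)))%N%:Z by lia.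
  by move=> ->; rewrite mulgV.
(* [trunc 0 R u] is finitely supported, hence trivial; at [L - p] it is [(g L)^-1]. *)
have := congr1 (fun f => f (L - p)%N%:Z) (NF (mem_trunc stK Nu u0 uR) (fin_supp_trunc 0 R u)).
rewrite /trunc /pone /u /pmul /pinv /tr ifT; last by lia.
have -> : (L - p)%N%:Z + p%:Z = L%:Z by lia.
rewrite g0 ?mul1g; last by lia.
by move/eqP; rewrite invg_eq1 => /eqP.
Qed.

Lemma trivial_window_propagates : exists L : nat,
  forall g a, N g -> trivial_on g a (a + L%:Z) -> forall n, a <= n -> g n = 1%g.
Proof.
have [L nextL] := trivial_prefix_next.
exists L => g a Ng ga.
suff ext k : trivial_on g a (a + k%:Z) by move=> n an; apply: (ext `|n - a|.+1); lia.
elim: k => [|k IHk] n nk1; first by lia.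
have [nk|kn] := ltrP n (a + k%:Z); first by apply: IHk; lia.
have [kL|Lk] := ltnP k L; first by apply: ga; lia.
have -> : n = L%:Z + (a + (k - L)%N%:Z) by lia.
apply: (nextL (tr (a + (k - L)%N%:Z) g)) => [|m mL]; first exact: NT.
by apply: IHk; lia.
Qed.

End VanishingPropagates.

Section Reflection.
Variable gT : finGroupType.
Implicit Types (f : seqZ gT) (N : seqZ gT -> Prop).

Definition reflectZ f : seqZ gT := fun n => f (- n).

Lemma reflectZK : involutive reflectZ.
Proof. by move=> f; apply: funext => n; rewrite /reflectZ opprK. Qed.

Lemma reflectZ_tr t f : reflectZ (tr t f) = tr (- t) (reflectZ f).
Proof. by apply: funext => n; rewrite /reflectZ /tr opprD opprK. Qed.

Lemma fin_supp_reflectZ f : fin_supp f -> fin_supp (reflectZ f).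
Proof.
case=> S fS; exists [seq - s | s <- S] => n nS; apply: fS.
by apply: contra nS => /(map_f -%R); rewrite opprK.
Qed.

Lemma tr_stable_reflectZ N : tr_stable N -> tr_stable (N \o reflectZ).
Proof. by move=> NT t f /= /(NT (- t)); rewrite -reflectZ_tr. Qed.

Lemma closedZ_reflectZ N : closedZ N -> closedZ (N \o reflectZ).
Proof.
move=> NC f /NC[S SNf]; exists [seq - s | s <- S] => g gf.
by apply: SNf => n nS; apply: gf; apply: map_f.
Qed.

Lemma fin_supp_trivial_reflectZ N : fin_supp_trivial N -> fin_supp_trivial (N \o reflectZ).
Proof.
move=> NF f Nf /fin_supp_reflectZ/(NF _ Nf) f1; apply: funext => n.
by have := congr1 (fun h => h (- n)) f1; rewrite /reflectZ opprK.
Qed.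

End Reflection.

Lemma finite_setZ_of_inj (gT : finGroupType) (T : finType) (N : seqZ gT -> Prop)
    (w : seqZ gT -> T) :
  (forall f g, N f -> N g -> w f = w g -> f = g) -> finite_setZ N.
Proof.
move=> w_inj.
pose rep t := epsilon (inhabits (@pone gT)) (fun g => N g /\ w g = t).
exists [seq rep t | t <- enum T] => f Nf.
exists (index (w f) (enum T)); first by rewrite size_map index_mem mem_enum.
rewrite (nth_map (w f)) ?index_mem ?mem_enum // nth_index ?mem_enum //.
have [Nr wr] : N (rep (w f)) /\ w (rep (w f)) = w f.
  by apply: (epsilon_spec _ (fun g => N g /\ w g = w f)); exists f.
by apply: w_inj; rewrite ?wr.
Qed.

Lemma central_of_normal (gT : finGroupType) (N : seqZ gT -> Prop) :
  is_subgroupZ N -> is_normalZ N -> fin_supp_trivial N ->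
  forall f, N f -> in_centreZ f.
Proof.
move=> [_ [NM NV]] Nnormal NF f Nf g; apply: funext => n; apply/commgP.
pose d : seqZ gT := fun m => if m == n then g n else 1%g.
pose c := pmul (pinv f) (pmul (pinv d) (pmul f d)).
have Nc : N c by apply: NM; [apply: NV | apply: Nnormal].
have c_supp : fin_supp c.
  exists [:: n] => m; rewrite inE /c /pmul /pinv /d => /negbTE ->.
  by rewrite invg1 mul1g mulg1 mulVg.
have := congr1 (fun h => h n) (NF _ Nc c_supp).
by rewrite /c /pmul /pinv /d /pone eqxx commgEl conjgE mulgA => ->.
Qed.

Section TrivialPrefix.
Variables (gT : finGroupType) (N : seqZ gT -> Prop).
Hypotheses (N1 : N (@pone gT)) (NM : forall f g, N f -> N g -> N (pmul f g))
  (NV : forall f, N f -> N (pinv f)) (NT : tr_stable N) (NC : closedZ N)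
  (NF : fin_supp_trivial N).

Lemma trivial_of_trivial_prefix : exists L : nat,
  forall g, N g -> trivial_on g 0 L%:Z -> g = @pone gT.
Proof.
have [L right] := trivial_window_propagates N1 NM NV NT NC NF.
have [L' left] := trivial_window_propagates (N := N \o @reflectZ gT) N1
  (fun f g => NM (f := reflectZ f) (g := reflectZ g)) (fun f => NV (f := reflectZ f))
  (tr_stable_reflectZ NT) (closedZ_reflectZ NC) (fin_supp_trivial_reflectZ NF).
exists L => g Ng g0; apply: funext => n.
have g_nonneg m : 0 <= m -> g m = 1%g by apply: (right g 0).
have [n0|n_neg] := lerP 0 n; first exact: g_nonneg.
rewrite -[n]opprK; apply: (left (reflectZ g) (- L'%:Z)); last by lia.
  by rewrite /= reflectZK.
by move=> m mL; apply: g_nonneg; lia.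
Qed.

Lemma finite_setZ_of_trivial_prefix : finite_setZ N.
Proof.
have [L trivL] := trivial_of_trivial_prefix.
apply: (@finite_setZ_of_inj _ _ N (fun f => [ffun t : 'I_L => f t%:Z])) => f g Nf Ng eq_fg.
have fg1 : pmul f (pinv g) = @pone gT.
  apply: trivL => [|[t|t] tL]; [by apply: NM => //; apply: NV | | by lia].
  have tL' : (t < L)%N by lia.
  have := congr1 (fun w : {ffun 'I_L -> gT} => w (Ordinal tL')) eq_fg.
  by rewrite !ffunE /pmul /pinv /= => ->; rewrite mulgV.
apply: funext => n; apply/eqP; rewrite eq_mulgV1.
by have := congr1 (fun h => h n) fg1; rewrite /pmul /pinv /pone => ->.
Qed.

End TrivialPrefix.

Theorem lemma6p7 (gT : finGroupType) (N : seqZ gT -> Prop) :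
  is_subgroupZ N -> is_normalZ N -> closedZ N -> sigma_stable N ->
  (forall f, N f -> fin_supp f -> f = @pone gT) ->
  finite_setZ N /\ (forall f, N f -> in_centreZ f).
Proof.
move=> Nsub Nnormal NC /sigma_stable_tr_stable NT NF.
split; last exact: central_of_normal.
by case: Nsub => N1 [NM NV]; apply: finite_setZ_of_trivial_prefix.
Qed.
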